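(* For $n\geqslant 3$, $\det(M_n)=(-1)^{n-3}(n-2)^{n-2}(n^2-5n+5)$. In particular, the matrix $M_n$ is non-degenerate.
   Context: Write a permutation $\pi$ of $\{1,\ldots,n\}$ as $[\pi_1\ldots\pi_n]$ with $\pi_j=\pi(j)$. For $i\in\{2,\ldots,n\}$ and $k\in\{3,\ldots,n\}$, define $f_i^{2,k}:\mathrm{Sym}_n\to\mathbb{R}$ by $f_i^{2,k}(\pi)=1$ if $\pi_2=i$, $-1$ if $\pi_k=i$, and $0$ otherwise. For distinct $r,s\in\{2,\ldots,n\}$, $(1\,r\,s)$ denotes the $3$-cycle mapping $1\mapsto r$, $r\mapsto s$, $s\mapsto 1$. $M_n$ is the $(n-1)(n-2)\times(n-1)(n-2)$ matrix whose entry in row $f$ and column $\pi$ is $f(\pi)$, with rows and columns ordered as follows. Rows are in $n-1$ consecutive cohorts indexed by $i=2,3,\ldots,n$: cohort $i=2$ is $f_2^{2,3},f_2^{2,4},\ldots,f_2^{2,n}$; for $i\ge3$, cohort $i$ is $f_i^{2,i}$ followed by the $f_i^{2,k}$ with $k\in\{3,\ldots,n\}\setminus\{i\}$ in increasing order of $k$. Columns are in $n-1$ consecutive blocks indexed by $s=2,3,\ldots,n$: block $s$ is $(1\,r\,s)$ for $r\in\{2,\ldots,n\}\setminus\{s\}$ in increasing order of $r$. *)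

From mathcomp Require Import all_boot all_order all_algebra.
Set Implicit Arguments. Unset Strict Implicit. Unset Printing Implicit Defensive.
Import GRing.Theory Num.Theory.
Local Open Scope ring_scope.

(* Points of {1,...,n} are represented by natural numbers (1-based, as in the
   paper); a permutation pi is represented by its action j |-> pi j on nat. *)

Definition f_fun (i k : nat) (pi : nat -> nat) : int :=
  if pi 2%N == i then 1 else if pi k == i then -1 else 0.

Definition cyc3 (r s : nat) : nat -> nat :=
  fun j => if j == 1%N then r else if j == r then s else if j == s then 1%N else j.

(* Row labels (i,k) of M_n, in the paper's order. *)
Definition Mrows (n : nat) : seq (nat * nat) :=
  [seq (2%N, k) | k <- iota 3 (n - 2)] ++
  flatten [seq (i, i) :: [seq (i, k) | k <- iota 3 (n - 2) & k != i]
          | i <- iota 3 (n - 2)].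

(* Column labels (r,s) of M_n (the 3-cycle (1 r s)), in the paper's order. *)
Definition Mcols (n : nat) : seq (nat * nat) :=
  flatten [seq [seq (r, s) | r <- iota 2 (n - 1) & r != s] | s <- iota 2 (n - 1)].

Definition Mn (n : nat) : 'M[int]_((n - 1) * (n - 2)) :=
  \matrix_(a, b)
    (let rk := nth (0%N, 0%N) (Mrows n) a in
     let rs := nth (0%N, 0%N) (Mcols n) b in
     f_fun rk.1 rk.2 (cyc3 rs.1 rs.2)).

From mathcomp Require Import all_boot all_algebra all_fingroup zify ring.
Set Implicit Arguments. Unset Strict Implicit. Unset Printing Implicit Defensive.
Import GRing.Theory.
Local Open Scope ring_scope.

(* Reorder the rows and columns of M_n by one and the same permutation into three
   groups: the rows f_2^{2,k} against the columns (1 k 2), the rows f_i^{2,i} against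
   the columns (1 2 i), and the remaining rows f_i^{2,k} against the columns (1 k i)
   (3 <= i, k <= n, k <> i).  The third diagonal block is then -1, so det M_n is,
   up to the sign (-1)^((n-2)(n-3)) = 1, the determinant of the Schur complement
     S = [[-1, m J], [1 - J, (m+1) - m J]],   m = n - 3,
   J the all-ones matrix of size n - 2.  Multiplying S on the right by
   [[1, m J], [0, 1]] makes it block lower triangular with diagonal blocks -1 and
   (m+1)(1 - m J), and det (1 - m J) = 1 - m (m+1) by the matrix determinant lemma. *)

Lemma filter_iota_neq a m c : (a <= c < a + m)%N ->
  [seq k <- iota a m | k != c] = [seq a + bump (c - a) p | p <- iota 0 m.-1]%N.
Proof.
elim: m a => [|m IHm] a /= ac_lt; first lia.
have [<-|ne_ac] := eqVneq a c.
  rewrite (@eq_in_filter _ _ predT) ?filter_predT; last by move=> k; rewrite mem_iota /=; lia.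
  by rewrite subnn -[a.+1]addn0 iotaDl; apply: eq_map => p; rewrite /bump; lia.
case: m IHm ac_lt => [|m] IHm ac_lt; first lia.
rewrite IHm /=; last lia.
rewrite -[1%N]addn0 iotaDl -map_comp /bump; congr (_ :: _); first lia.
by apply: eq_map => p /=; lia.
Qed.

Lemma nth_flatten_uniform T (x0 : T) (L : seq (seq T)) q b p :
  all (fun s => size s == q) L -> (p < q)%N ->
  nth x0 (flatten L) (b * q + p) = nth x0 (nth [::] L b) p.
Proof.
elim: L b => [|s L IHL] [|b] /=; rewrite ?nth_nil // => /andP[/eqP s_q L_q] p_lt.
  by rewrite nth_cat s_q p_lt.
by rewrite nth_cat s_q mulSn -addnA ltnNge leq_addr /= addKn IHL.
Qed.

Section DeterminantTools.
Variable R : comPzRingType.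

Lemma det_reindex m n (h : 'I_m -> 'I_n) (A : 'M[R]_n) :
  m = n -> injective h -> \det (\matrix_(i, j) A (h i) (h j)) = \det A.
Proof.
move=> eq_mn; subst n => inj_h; pose s := perm inj_h.
have -> : \matrix_(i, j) A (h i) (h j) = row_perm s (col_perm s A).
  by apply/matrixP => i j; rewrite !mxE !permE.
by rewrite row_permE col_permE !det_mulmx !det_perm odd_permV mulrCA -expr2 sqrr_sign mulr1.
Qed.

Lemma det_block_mxN1 n1 n2 (A : 'M[R]_n1) B C :
  \det (block_mx A B C (-1)%:M : 'M_(n1 + n2)) = (-1) ^+ n2 * \det (A + B *m C).
Proof.
have elim_C : block_mx A B C (-1)%:M *m block_mx 1%:M 0 C 1%:M =
    block_mx (A + B *m C) B 0 (-1)%:M :> 'M_(n1 + n2).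
  by rewrite mulmx_block !mulmx1 !mulmx0 mul_scalar_mx scaleN1r subrr !add0r.
have := congr1 determinant elim_C.
by rewrite det_mulmx det_lblock !det1 !mulr1 det_ublock det_scalar mulrC.
Qed.

Lemma det_1D_col_row n (u : 'cV[R]_n) (v : 'rV[R]_n) :
  \det (1%:M + u *m v) = 1 + (v *m u) 0 0.
Proof.
have E1 : block_mx 1%:M (- u) v 1%:M =
    block_mx 1%:M 0 v 1%:M *m block_mx 1%:M (- u) 0 (1%:M + v *m u) :> 'M_(n + 1).
  by rewrite mulmx_block !(mulmx1, mul1mx, mulmx0, mul0mx, addr0, add0r) mulmxN addrCA addNr addr0.
have E2 : block_mx 1%:M (- u) v 1%:M =
    block_mx (1%:M + u *m v) (- u) 0 1%:M *m block_mx 1%:M 0 v 1%:M :> 'M_(n + 1).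
  by rewrite mulmx_block !(mulmx1, mul1mx, mulmx0, mul0mx, addr0, add0r) mulNmx addrK.
have := congr1 determinant (etrans (esym E1) E2).
rewrite !det_mulmx !det_ublock det_lblock !det1 !mul1r !mulr1 => <-.
by rewrite det_mx11 !mxE.
Qed.

Lemma mul_const_mx1 a k b :
  (const_mx 1 : 'M[R]_(a, k)) *m (const_mx 1 : 'M[R]_(k, b)) = k%:R *: const_mx 1.
Proof.
apply/matrixP => i j; rewrite !mxE (eq_bigr (fun=> 1)) => [|l _]; last by rewrite !mxE mulr1.
by rewrite sumr_const card_ord mulr1.
Qed.

Lemma det_1D_scale_const k (a : R) : \det (1%:M + a *: const_mx 1 : 'M[R]_k) = 1 + a * k%:R.
Proof.
have -> : a *: const_mx 1 = (const_mx 1 : 'cV[R]_k) *m (const_mx a : 'rV[R]_k).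
  by apply/matrixP => i j; rewrite !mxE big_ord1 !mxE mulr1 mul1r.
rewrite (det_1D_col_row (const_mx 1) (const_mx a)) mxE (eq_bigr (fun=> a)) => [|l _].
  by rewrite sumr_const card_ord mulr_natr.
by rewrite !mxE mulr1.
Qed.
End DeterminantTools.

Definition mxvec_pair a b (z : 'I_(a * b)) : 'I_a * 'I_b :=
  enum_val (cast_ord (esym (mxvec_cast a b)) z).

Lemma mxvec_pairK a b (i : 'I_a) (j : 'I_b) : mxvec_pair (mxvec_index i j) = (i, j).
Proof. by rewrite /mxvec_pair cast_ordK enum_rankK. Qed.

Lemma eq_mxvec_index a b (i i' : 'I_a) (j j' : 'I_b) :
  (mxvec_index i j == mxvec_index i' j') = (i == i') && (j == j').
Proof.
apply/eqP/andP => [/(congr1 (@mxvec_pair a b))|[/eqP-> /eqP->] //].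
by rewrite !mxvec_pairK => -[-> ->].
Qed.

Lemma sum_mxvec (V : nmodType) a b (F : 'I_(a * b) -> V) :
  \sum_z F z = \sum_(i < a) \sum_(j < b) F (mxvec_index i j).
Proof.
rewrite pair_big /= (reindex (uncurry (@mxvec_index a b))) //=; last exact: curry_mxvec_bij.
by apply: eq_bigr => -[i j].
Qed.

Lemma sum2_indicator (R : pzSemiRingType) a b (F : 'I_a -> 'I_b -> R) c :
  \sum_(i < a) \sum_(j < b) F i j * (i == c)%:R = \sum_(j < b) F c j.
Proof.
rewrite (bigD1 c) //= [X in _ + X]big1 ?addr0 => [|i ne_ic].
  by apply: eq_bigr => j _; rewrite eqxx mulr1.
by apply: big1 => j _; rewrite (negbTE ne_ic) mulr0.
Qed.

Lemma sum_lift_neq (R : pzRingType) n (c b : 'I_n.+1) :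
  c != b -> \sum_(t < n) (lift c t != b)%:R = n%:R - 1 :> R.
Proof.
case/unlift_some => t0 -> _.
rewrite (eq_bigr (fun t => 1 - (t == t0)%:R)) => [|t _]; last first.
  by rewrite (inj_eq lift_inj); case: (t == t0); rewrite ?subr0 ?subrr.
rewrite big_split /= sumrN sumr_const card_ord (bigD1 t0) //= eqxx.
by rewrite big1 ?addr0 // => t /negbTE->.
Qed.

Definition row_label (b p : nat) : nat * nat :=
  (b + 2, if (p == 0) && (b != 0) then b + 2 else (bump b p).+2)%N.

Definition col_label (c t : nat) : nat * nat := ((bump c t).+2, c + 2)%N.

Lemma nth_Mrows q b p : (b <= q)%N -> (p < q)%N ->
  nth (0, 0)%N (Mrows q.+2) (b * q + p) = row_label b p.
Proof.
move=> b_le p_lt; rewrite /Mrows !subSS subn0.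
set Z := [seq _ | _ <- _]; set L := [seq _ :: _ | _ <- _].
rewrite (_ : Z ++ flatten L = flatten (Z :: L)) // nth_flatten_uniform {}/Z {}/L //; last first.
  rewrite /= size_map size_iota eqxx; apply/allP => ? /mapP[i]; rewrite mem_iota => i_in ->.
  by rewrite /= size_map filter_iota_neq ?size_map ?size_iota; lia.
rewrite /row_label; case: b b_le => [|b] b_le /=.
  by rewrite (nth_map 0%N) ?size_iota ?nth_iota // andbF /bump leq0n add1n.
rewrite (nth_map 0%N) ?size_iota // nth_iota //.
case: p p_lt => [|p] p_lt /=; first by congr (_, _); lia.
rewrite (nth_map 0%N) filter_iota_neq ?size_map ?size_iota; try lia.
rewrite (nth_map 0%N) ?size_iota ?nth_iota; try lia.
by rewrite addKn add0n bumpS; congr (_, _); lia.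
Qed.

Lemma nth_Mcols q c t : (c <= q)%N -> (t < q)%N ->
  nth (0, 0)%N (Mcols q.+2) (c * q + t) = col_label c t.
Proof.
move=> c_le t_lt; rewrite /Mcols !subSS subn0 nth_flatten_uniform //; last first.
  apply/allP => ? /mapP[s]; rewrite mem_iota => s_in ->.
  by rewrite size_map filter_iota_neq ?size_map ?size_iota; lia.
rewrite (nth_map 0%N) ?size_iota ?nth_iota; try lia.
rewrite (nth_map 0%N) filter_iota_neq ?size_map ?size_iota; try lia.
by rewrite (nth_map 0%N) ?size_iota ?nth_iota /col_label /bump /=; try lia; congr (_, _); lia.
Qed.

(* Bounded as the index type of Mn itself: 'I_(q.+1 * q) is convertible to it but
   does not unify with it. *)
Lemma flat_index_subproof q (b : 'I_q.+1) (p : 'I_q) :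
  (b * q + p < (q.+2 - 1) * (q.+2 - 2))%N.
Proof. by have := ltn_ord b; have := ltn_ord p; nia. Qed.

Definition flat_index q (b : 'I_q.+1) (p : 'I_q) := Ordinal (flat_index_subproof b p).

Lemma flat_index_inj q : injective (uncurry (@flat_index q)).
Proof.
move=> [b p] [c t] /(congr1 val) /= eq_bp.
have q_gt0 : (0 < q)%N by apply: leq_ltn_trans (ltn_ord p).
have := congr1 (divn^~ q) eq_bp; have := congr1 (modn^~ q) eq_bp.
rewrite !modnMDl !modn_small // !divnMDl // !divn_small // !addn0.
by move=> /val_inj -> /val_inj ->.
Qed.

Definition label_entry (rl cl : nat * nat) : int := f_fun rl.1 rl.2 (cyc3 cl.1 cl.2).

Lemma Mn_flat q (b c : 'I_q.+1) (p t : 'I_q) :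
  Mn q.+2 (flat_index b p) (flat_index c t) = label_entry (row_label b p) (col_label c t).
Proof. by rewrite mxE /= nth_Mrows ?nth_Mcols // -ltnS. Qed.

Section BlockForm.
Variable m : nat.
Local Notation q := m.+1.
Local Notation J := (const_mx 1).

(* The three groups of indices of the reordered matrix Mb below:
   ix2 p    is the row f_2^{2,p+3} and the column (1 (p+3) 2),
   ixd c    is the row f_{c+3}^{2,c+3} and the column (1 2 (c+3)),
   ixg c t  is the row f_{c+3}^{2,k} and the column (1 k (c+3)), for the t-th k in
            {3, ..., n} minus {c+3}. *)
Local Notation ix2 p := (lshift _ (lshift _ p)).
Local Notation ixd c := (lshift _ (rshift _ c)).
Local Notation ixg c t := (rshift _ (mxvec_index c t)).

Definition reorder (x : 'I_((q + q) + q * m)) : 'I_q.+1 * 'I_q :=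
  match split x with
  | inl y => match split y with
             | inl p => (ord0, p)
             | inr c => (lift ord0 c, ord0)
             end
  | inr z => let: (c, t) := mxvec_pair z in (lift ord0 c, lift ord0 t)
  end.

Definition unreorder (bp : 'I_q.+1 * 'I_q) : 'I_((q + q) + q * m) :=
  match unlift ord0 bp.1, unlift ord0 bp.2 with
  | None, _ => ix2 bp.2
  | Some c, None => ixd c
  | Some c, Some t => ixg c t
  end.

Lemma reorderK : cancel reorder unreorder.
Proof.
move=> x; rewrite /reorder /unreorder -[x in RHS]splitK.
case: (split x) => [y|z] /=; last first.
  by case/mxvec_indexP: z => c t; rewrite mxvec_pairK /= !liftK.
rewrite -[y in RHS]splitK; case: (split y) => [p|c] /=; last by rewrite liftK unlift_none.
by rewrite unlift_none.
Qed.

Lemma reorder2 p : reorder (ix2 p) = (ord0, p).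
Proof. by rewrite /reorder !(unsplitK (inl _)). Qed.

Lemma reorderd c : reorder (ixd c) = (lift ord0 c, ord0).
Proof. by rewrite /reorder (unsplitK (inl _)) (unsplitK (inr _)). Qed.

Lemma reorderg c t : reorder (ixg c t) = (lift ord0 c, lift ord0 t).
Proof. by rewrite /reorder (unsplitK (inr _)) mxvec_pairK. Qed.

Definition reindex (x : 'I_((q + q) + q * m)) : 'I_((m.+3 - 1) * (m.+3 - 2)) :=
  uncurry (@flat_index q) (reorder x).

Lemma reindex_inj : injective reindex.
Proof. by move=> x y /flat_index_inj /(can_inj reorderK). Qed.

Definition Mb_row (x : 'I_((q + q) + q * m)) := row_label (reorder x).1 (reorder x).2.
Definition Mb_col (x : 'I_((q + q) + q * m)) := col_label (reorder x).1 (reorder x).2.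

Lemma Mb_row2 p : Mb_row (ix2 p) = (2, p.+3)%N.
Proof. by rewrite /Mb_row reorder2 /row_label /bump /= andbF add1n. Qed.

Lemma Mb_rowd c : Mb_row (ixd c) = (c.+3, c.+3)%N.
Proof. by rewrite /Mb_row reorderd /row_label /= !addn2. Qed.

Lemma Mb_rowg c t : Mb_row (ixg c t) = (c.+3, (bump c t).+3)%N.
Proof. by rewrite /Mb_row reorderg /row_label /= addn2 bumpS. Qed.

Lemma Mb_col2 p : Mb_col (ix2 p) = (p.+3, 2)%N.
Proof. by rewrite /Mb_col reorder2 /col_label /bump /= add1n. Qed.

Lemma Mb_cold c : Mb_col (ixd c) = (2, c.+3)%N.
Proof. by rewrite /Mb_col reorderd /col_label /= addn2. Qed.

Lemma Mb_colg c t : Mb_col (ixg c t) = ((bump c t).+3, c.+3)%N.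
Proof. by rewrite /Mb_col reorderg /col_label /= addn2 bumpS. Qed.

Definition Mb : 'M[int]_((q + q) + q * m) := \matrix_(x, y) Mn m.+3 (reindex x) (reindex y).

Lemma det_Mb : \det Mb = \det (Mn m.+3).
Proof. by apply: det_reindex reindex_inj; rewrite mulSn; lia. Qed.

Lemma MbE x y : Mb x y = label_entry (Mb_row x) (Mb_col y).
Proof.
rewrite mxE /reindex /Mb_row /Mb_col.
by case: (reorder x) => b p; case: (reorder y) => c t; apply: (@Mn_flat q).
Qed.

Ltac compute_entry :=
  rewrite MbE ?Mb_row2 ?Mb_rowd ?Mb_rowg ?Mb_col2 ?Mb_cold ?Mb_colg;
  rewrite /label_entry /f_fun /cyc3 -?val_eqE /= /bump; repeat case: ifP; move=> *; lia.

Lemma Mb22 p p' : Mb (ix2 p) (ix2 p') = - (p == p')%:R.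
Proof. compute_entry. Qed.
Lemma Mb2d p c : Mb (ix2 p) (ixd c) = 0.
Proof. compute_entry. Qed.
Lemma Mb2g p c t : Mb (ix2 p) (ixg c t) = 1.
Proof. compute_entry. Qed.
Lemma Mbd2 b p : Mb (ixd b) (ix2 p) = - (b != p)%:R.
Proof. compute_entry. Qed.
Lemma Mbdd b c : Mb (ixd b) (ixd c) = if b == c then 1 else -1.
Proof. compute_entry. Qed.
Lemma Mbdg b c t : Mb (ixd b) (ixg c t) = - ((b != c) && (lift c t != b))%:R.
Proof. compute_entry. Qed.
Lemma Mbg2 c t p : Mb (ixg c t) (ix2 p) = 0.
Proof. compute_entry. Qed.
Lemma Mbgd c t c' : Mb (ixg c t) (ixd c') = (c == c')%:R.
Proof. compute_entry. Qed.
Lemma Mbgg c t c' t' : Mb (ixg c t) (ixg c' t') = - ((c == c') && (t == t'))%:R.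
Proof. compute_entry. Qed.

Lemma Mb_dr : drsubmx Mb = (-1)%:M.
Proof.
apply/matrixP => z w; case/mxvec_indexP: z => c t; case/mxvec_indexP: w => c' t'.
by rewrite 2![LHS]mxE Mbgg !mxE eq_mxvec_index mulNrn.
Qed.

Lemma Mb_ur_dl x y : (ursubmx Mb *m dlsubmx Mb) x y =
  \sum_(c < q) \sum_(t < m) Mb (lshift _ x) (ixg c t) * Mb (ixg c t) (lshift _ y).
Proof.
rewrite mxE sum_mxvec; apply: eq_bigr => c _; apply: eq_bigr => t _.
by congr (_ * _); rewrite 2![LHS]mxE.
Qed.

Definition schur_mx : 'M[int]_(q + q) :=
  block_mx (-1)%:M (m%:R *: J) (1%:M - J) (q%:R%:M - m%:R *: J).

Lemma Mb_schur : ulsubmx Mb + ursubmx Mb *m dlsubmx Mb = schur_mx.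
Proof.
apply/matrixP => x y; rewrite [LHS]mxE Mb_ur_dl 2![X in X + _]mxE.
case: (split_ordP x) => b ->; case: (split_ordP y) => c ->; rewrite /schur_mx.
- rewrite block_mxEul Mb22 big1 ?addr0 => [|c' _]; first by rewrite mxE mulNrn.
  by rewrite big1 // => t _; rewrite Mbg2 mulr0.
- rewrite block_mxEur Mb2d add0r.
  under eq_bigr do under eq_bigr do rewrite Mbgd.
  rewrite sum2_indicator; under eq_bigr do rewrite Mb2g.
  by rewrite sumr_const card_ord !mxE mulr1.
- rewrite block_mxEdl Mbd2 big1 ?addr0 => [|c' _].
    by rewrite !mxE; case: (b == c); rewrite ?subrr ?sub0r.
  by rewrite big1 // => t _; rewrite Mbg2 mulr0.
- rewrite block_mxEdr Mbdd.
  under eq_bigr do under eq_bigr do rewrite Mbgd.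
  rewrite sum2_indicator; under eq_bigr do rewrite Mbdg.
  rewrite !mxE mulr1; have [<-|ne_bc] := eqVneq b c.
    by rewrite big1 ?addr0 => [|t _]; rewrite ?eqxx //; lia.
  by rewrite sumrN /= sum_lift_neq 1?eq_sym //; lia.
Qed.

End BlockForm.

Lemma det_schur_mx m :
  \det (schur_mx m) = (-1) ^+ m.+1 * m.+1%:R ^+ m.+1 * (1 - m%:R * m.+1%:R).
Proof.
set J := const_mx 1 : 'M[int]_m.+1.
pose U : 'M[int]_(m.+1 + m.+1) := block_mx 1%:M (m%:R *: J) 0 1%:M.
have triangular : schur_mx m *m U =
    block_mx (-1)%:M 0 (1%:M - J) (m.+1%:R *: (1%:M + (- m%:R) *: J)).
  rewrite /schur_mx /U mulmx_block !mulmx0 !mulmx1 !addr0 mul_scalar_mx scaleN1r addNr.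
  congr block_mx; rewrite mulmxBl mul1mx -scalemxAr mul_const_mx1 scalerA scalerDr.
  rewrite scale_scalar_mx mulr1 scalerA mulrN scaleNr addrC addrA subrK mulrC //.
have := congr1 determinant triangular.
rewrite det_mulmx det_ublock !det1 !mulr1 => ->.
by rewrite det_lblock det_scalar detZ det_1D_scale_const mulNr mulrA.
Qed.

Lemma det_Mn m :
  \det (Mn m.+3) = (-1) ^+ m.+1 * m.+1%:R ^+ m.+1 * (1 - m%:R * m.+1%:R).
Proof.
rewrite -det_Mb -[Mb m]submxK Mb_dr det_block_mxN1 Mb_schur det_schur_mx.
by rewrite -signr_odd oddM andNb mul1r.
Qed.

Theorem lemma17 (n : nat) : (3 <= n)%N ->
  \det (Mn n) = (-1) ^+ (n - 3) * ((n - 2)%:Z) ^+ (n - 2)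
                 * ((n%:Z) ^+ 2 - 5 * n%:Z + 5)
  /\ \det (Mn n) != 0.
Proof.
move=> n_ge3; have [m ->] : exists m, n = m.+3 by exists (n - 3)%N; lia.
have det_eq : \det (Mn m.+3) =
    (-1) ^+ (m.+3 - 3) * ((m.+3 - 2)%:Z) ^+ (m.+3 - 2) * ((m.+3%:Z) ^+ 2 - 5 * m.+3%:Z + 5).
  by rewrite det_Mn !subSS !subn0 exprS -!natz !mulrSr; ring.
split=> //; rewrite det_eq !mulf_neq0 ?expf_neq0 ?oppr_eq0 ?oner_eq0 //.
(* n^2 - 5n + 5 is odd. *)
by rewrite expr2; apply/eqP => H; nia.
Qed.
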